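(* Let $Q=\sum_{i\in I}E_{i,\sigma(i)}\in N_n$ be a subpermutation and let $A=[a_{ij}]\in QU_n$ be a Belitskii canonical form under $B_n$-similarity. If $a_{ij}\neq0$, then $i\in I=[n]\setminus S_h$ and one of the following holds: (1) $j=i^+$ (and then $a_{ij}=1$); (2) $j\in S_t\setminus S_h$ and $i^+<j$; (3) $j\notin S_t\cup S_h$ and $j^-<i<i^+<j$. In particular, for each $i\in I$ and each chain of $G_Q$ there is at most one vertex $j$ of that chain with $a_{ij}\neq0$.
   Context: $\mathbb F$ is a field; $[n]=\{1,\dots,n\}$. $B_n$ (resp. $U_n$, $N_n$) is the set of $n\times n$ invertible upper triangular (resp. upper triangular with diagonal entries $1$, strictly upper triangular) matrices over $\mathbb F$; $QU_n=\{QU:U\in U_n\}$; $E_{ij}$ is the matrix unit. A subpermutation is a matrix each of whose rows and columns has at most one nonzero entry, equal to $1$; here $I\subseteq[n]$ and $\sigma:I\to[n]$ is injective with $i<\sigma(i)$. $G_Q$ is the directed graph on $[n]$ with arcs $(i,\sigma(i))$, $i\in I$; its connected components are directed paths $i_1\to\cdots\to i_p$ with $i_1<\cdots<i_p$, called chains. Notation: $i^+:=\sigma(i)$ for $i\in I$, $j^-:=\sigma^{-1}(j)$ for $j\in\sigma(I)$; $S_h=[n]\setminus I$ (chain heads), $S_t=[n]\setminus\sigma(I)$ (chain tails). Belitskii order on positions $\{(i,j):1\le i<j\le n\}$: $(i,j)\prec(i',j')$ iff $i>i'$, or $i=i'$ and $j<j'$. Belitskii's algorithm for $B_n$-similarity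 on $N_n$: given $A\in N_n$ put $A^{(0)}=A$, $G^{(0)}=B_n$. For $k=0,1,\dots$, let $(p,q)$ be the $(k+1)$th position in Belitskii order and look at the $(p,q)$ entries of all matrices $G^{(k)}$-similar to $A^{(k)}$: (a) if this entry is always $0$ or can take every value of $\mathbb F$, choose $A^{(k+1)}$ $G^{(k)}$-similar to $A^{(k)}$ with that entry $0$; (b) if it takes exactly the values of $\mathbb F\setminus\{0\}$, choose $A^{(k+1)}$ with that entry $1$; (c) otherwise it is a constant $\lambda\ne0$ and $A^{(k+1)}=A^{(k)}$. $G^{(k+1)}$ is the subgroup of $g\in G^{(k)}$ such that $gA^{(k+1)}g^{-1}$ agrees with $A^{(k+1)}$ in the first $k+1$ positions. The final matrix is the Belitskii canonical form of $A$; a matrix is a Belitskii canonical form if it is the Belitskii canonical form of some matrix. *)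

From HB Require Import structures.
From mathcomp Require Import all_boot all_order all_algebra.
Set Implicit Arguments. Unset Strict Implicit. Unset Printing Implicit Defensive.
Import GRing.Theory.
Local Open Scope ring_scope.

Section Belitskii.
Variables (F : fieldType) (n : nat).

Definition upper_trimx (g : 'M[F]_n) : bool :=
  [forall i : 'I_n, forall j : 'I_n, (j < i)%N ==> (g i j == 0)].

Definition Bn (g : 'M[F]_n) : bool := upper_trimx g && (g \in unitmx).

Definition Un (g : 'M[F]_n) : bool :=
  upper_trimx g && [forall i : 'I_n, g i i == 1].

Definition Nn (g : 'M[F]_n) : bool :=
  [forall i : 'I_n, forall j : 'I_n, (j <= i)%N ==> (g i j == 0)].

Definition simmx (g A : 'M[F]_n) : 'M[F]_n := g *m A *m invmx g.

Definition belitskii_positions : seq ('I_n * 'I_n) :=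
  [seq (i, j) | i : 'I_n <- rev (enum 'I_n), j : 'I_n <- filter (fun j0 : 'I_n => (i < j0)%N) (enum 'I_n)].

Definition agree_on (s : seq ('I_n * 'I_n)) (A B : 'M[F]_n) : bool :=
  all (fun pq => A pq.1 pq.2 == B pq.1 pq.2) s.

Fixpoint belitskii_group (As : nat -> 'M[F]_n) (k : nat) (g : 'M[F]_n) : bool :=
  match k with
  | 0 => Bn g
  | k'.+1 => belitskii_group As k' g &&
             agree_on (take k belitskii_positions) (simmx g (As k)) (As k)
  end.

Definition belitskii_step (G : 'M[F]_n -> bool) (pos : 'I_n * 'I_n)
    (A A' : 'M[F]_n) : Prop :=
  let V := fun x : F => exists2 g, G g & simmx g A pos.1 pos.2 = x in
  let caseA := (forall x, V x <-> x = 0) \/ (forall x, V x) in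
  let caseB := forall x, V x <-> x != 0 in
  (caseA -> exists2 g, G g & A' = simmx g A /\ A' pos.1 pos.2 = 0) /\
  (caseB -> exists2 g, G g & A' = simmx g A /\ A' pos.1 pos.2 = 1) /\
  (~ caseA -> ~ caseB -> A' = A).

Definition belitskii_run (M : 'M[F]_n) (As : nat -> 'M[F]_n) : Prop :=
  Nn M /\ As 0%N = M /\
  forall (k : nat) (pos : 'I_n * 'I_n), onth belitskii_positions k = Some pos ->
    belitskii_step (belitskii_group As k) pos (As k) (As k.+1).

Definition belitskii_cf_of (M A : 'M[F]_n) : Prop :=
  exists As, belitskii_run M As /\ A = As (size belitskii_positions).

Definition is_belitskii_cf (A : 'M[F]_n) : Prop := exists M, belitskii_cf_of M A.

Definition subperm_mx (I : {set 'I_n}) (sigma : 'I_n -> 'I_n) : 'M[F]_n :=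
  \matrix_(i, j) (if (i \in I) && (sigma i == j) then 1 else 0).

Definition in_QU (Q A : 'M[F]_n) : Prop := exists2 U, Un U & A = Q *m U.

End Belitskii.

(* undirected adjacency of the graph G_Q: arcs (i, sigma i), i in I *)
Definition GQ_adj (n : nat) (I : {set 'I_n}) (sigma : 'I_n -> 'I_n) : rel 'I_n :=
  fun x y => ((x \in I) && (sigma x == y)) || ((y \in I) && (sigma y == x)).

(* In A = QU, row i of A is row i^+ of U if i is in I and zero otherwise, so a
   nonzero a_ij forces i in I and j >= i^+, with a_ij = u_jj = 1 when j = i^+.
   For j > i^+ it suffices to find, for every x, a unitriangular g that fixes
   the positions preceding (i, j) in Belitskii order and adds x at (i, j):
   such a g lies in the group of the algorithm at that step, which was
   therefore in case (a) and made a_ij zero.  If j is a chain head, row j of A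
   vanishes and, as A U^-1 = Q, subtracting x times column i^+ of U^-1 from
   column j does it; if j = q^+ with q > i, adding x times row q to row i does
   it.  What remains are cases (1)-(3).  Finally, if a_ij1 and a_ij2 are
   nonzero with j1 < j2 on one chain, then j2 = w^+ with w >= j1 >= i^+ > i,
   whereas (1)-(3) force w <= i. *)

From HB Require Import structures.
From mathcomp Require Import all_boot all_order all_algebra zify ring.
From Stdlib Require Import Classical.
Set Implicit Arguments. Unset Strict Implicit. Unset Printing Implicit Defensive.
Import GRing.Theory.
Local Open Scope ring_scope.

Lemma onth_index (T : eqType) (s : seq T) x : x \in s -> onth s (index x s) = Some x.
Proof. by move=> xs; rewrite onthE (nth_map x) ?index_mem // nth_index. Qed.

Lemma sum_mulrn_eq (V : nmodType) (I : finType) (f : I -> V) t :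
  \sum_i f i *+ (i == t) = f t.
Proof. by rewrite (bigD1 t) //= eqxx big1 ?addr0 // => i /negbTE->. Qed.

Section Chains.
Variable T : finType.
Implicit Type e : rel T.

Lemma connect_first e x z : connect e x z -> x != z -> exists2 y, e x y & connect e y z.
Proof.
case/connectP=> [[|y p]] /=; first by move=> _ ->; rewrite eqxx.
by case/andP=> xy yp -> _; exists y => //; apply/connectP; exists p.
Qed.

Lemma connect_last e x z : connect e x z -> x != z -> exists2 y, connect e x y & e y z.
Proof.
move=> xz; rewrite eq_sym; have := connect_rev e z x; rewrite /= xz.
move=> /connect_first/[apply] -[y zy yx].
by exists y => //; rewrite -[connect e x y](connect_rev e y x).
Qed.

Lemma connect_undirected e x y :
  (forall x y y', e x y -> e x y' -> y = y') ->
  (forall x x' y, e x y -> e x' y -> x = x') ->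
  connect [rel a b | e a b || e b a] x y -> connect e x y || connect e y x.
Proof.
move=> e_fun e_inj; case/connectP=> p + ->{y}.
(* each undirected step extends the directed path, or retraces its first or last arc *)
elim: p x => [|z p IH] x /=; first by rewrite connect0.
case/andP=> /orP[xz|zx] /IH {IH}/orP[zL|Lz].
- by rewrite (connect_trans (connect1 xz) zL).
- have [->|Lnz] := eqVneq (last z p) z; first by rewrite (connect1 xz).
  have [w Lw wz] := connect_last Lz Lnz.
  by rewrite -(e_inj _ _ _ wz xz) Lw orbT.
- have [<-|znL] := eqVneq z (last z p); first by rewrite (connect1 zx) orbT.
  have [w zw wL] := connect_first zL znL.
  by rewrite (e_fun _ _ _ zx zw) wL.
- by rewrite (connect_trans Lz (connect1 zx)) orbT.
Qed.

Lemma connect_homo_leq e (f : T -> nat) :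
  {homo f : x y / e x y >-> (x < y)%N} -> {homo f : x y / connect e x y >-> (x <= y)%N}.
Proof.
move=> f_lt x y /connectP[p]; elim: p x => [|z p IH] x /=; first by move=> _ ->.
by case/andP=> /f_lt xz /IH zy /zy; apply: leq_trans (ltnW xz).
Qed.

End Chains.

Section UpperTriangular.
Variables (F : fieldType) (n : nat).
Implicit Types (g h X Y Z : 'M[F]_n).

Lemma mxBE X Y (a b : 'I_n) : (X - Y) a b = X a b - Y a b.
Proof. by rewrite !mxE. Qed.

Lemma upper_trimxP g :
  reflect (forall a b : 'I_n, (b < a)%N -> g a b = 0) (upper_trimx g).
Proof.
apply: (iffP forallP) => [g0 a b ba | g0 a].
  by have /forallP/(_ b)/implyP/(_ ba)/eqP := g0 a.
by apply/forallP => b; apply/implyP => /g0 ->.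
Qed.

Lemma NnP X : reflect (forall a b : 'I_n, (b <= a)%N -> X a b = 0) (Nn X).
Proof.
apply: (iffP forallP) => [X0 a b ba | X0 a].
  by have /forallP/(_ b)/implyP/(_ ba)/eqP := X0 a.
by apply/forallP => b; apply/implyP => /X0 ->.
Qed.

Lemma det_upper_trimx g : upper_trimx g -> \det g = \prod_a g a a.
Proof.
move/upper_trimxP => g0; rewrite -det_tr det_trig; last first.
  by apply/is_trig_mxP => a b ab; rewrite mxE g0.
by apply: eq_bigr => a _; rewrite mxE.
Qed.

Lemma Un_Bn g : Un g -> Bn g.
Proof.
case/andP=> g_up /forallP g1; rewrite /Bn g_up unitmxE det_upper_trimx //.
by rewrite big1 ?unitr1 // => a _; apply/eqP.
Qed.

Lemma upper_trimx_invmx g : Bn g -> upper_trimx (invmx g).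
Proof.
case/andP=> g_up g_unit; have /upper_trimxP g0 := g_up.
have g_diag b : g b b != 0.
  move: g_unit; rewrite unitmxE unitfE det_upper_trimx //.
  by apply: contraNneq => gb0; rewrite (bigD1 b) //= gb0 mul0r.
(* entry (a, b) of [invmx g *m g = 1] only involves the columns c <= b of [invmx g] *)
suff inv0 m (a b : 'I_n) : (b < m)%N -> (b < a)%N -> invmx g a b = 0.
  by apply/upper_trimxP => a b; apply: inv0.
elim: m a b => // m IH a b bm ba.
have /matrixP/(_ a b) := mulVmx g_unit.
rewrite !mxE (bigD1 b) //= big1 => [|c cb]; last first.
  have [cb'|bc|/val_inj cbE] := ltngtP c b; last by rewrite cbE eqxx in cb.
  - by rewrite IH ?mul0r ?(leq_trans cb' bm) ?(ltn_trans cb' ba).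
  - by rewrite g0 ?mulr0.
have -> : (a == b) = false by apply/eqP => abE; rewrite abE ltnn in ba.
by rewrite addr0 => /eqP; rewrite mulf_eq0 (negbTE (g_diag b)) orbF => /eqP.
Qed.

(* The (r, s) entry of [g *m Z *m h] only sees the cone a >= r, b <= s of Z. *)
Lemma mulmx_upper_cone g h Z (r s : 'I_n) : upper_trimx g -> upper_trimx h ->
  (forall a b : 'I_n, (r <= a)%N -> (b <= s)%N -> (a, b) != (r, s) -> Z a b = 0) ->
  (g *m Z *m h) r s = g r r * Z r s * h s s.
Proof.
move=> /upper_trimxP g0 /upper_trimxP h0 Z0.
have gZ0 b : b != s -> (g *m Z) r b * h b s = 0.
  move=> bs; have [sb|bs'] := ltnP s b; first by rewrite h0 ?mulr0.
  rewrite mxE big1 ?mul0r // => a _; have [ar|ra] := ltnP a r; first by rewrite g0 ?mul0r.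
  by rewrite Z0 ?mulr0 // xpair_eqE (negbTE bs) andbF.
rewrite mxE (bigD1 s) //= big1 ?addr0; last by move=> b; apply: gZ0.
rewrite mxE (bigD1 r) //= big1 ?addr0 // => a ar.
have [ar'|ra] := ltnP a r; first by rewrite g0 ?mul0r.
by rewrite Z0 ?mulr0 // xpair_eqE (negbTE ar).
Qed.

Lemma mulmx_upper_cone_eq g h X Y (r s : 'I_n) : upper_trimx g -> upper_trimx h ->
  (forall a b : 'I_n, (r <= a)%N -> (b <= s)%N -> X a b = Y a b) ->
  (g *m X *m h) r s = (g *m Y *m h) r s.
Proof.
move=> g_up h_up XY; apply/eqP; rewrite -subr_eq0.
have -> : (g *m X *m h) r s - (g *m Y *m h) r s = (g *m (X - Y) *m h) r s.
  by rewrite mulmxBr mulmxBl mxBE.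
rewrite (mulmx_upper_cone g_up h_up) => [|a b ra bs _]; rewrite mxBE XY ?subrr //.
by rewrite mulr0 mul0r.
Qed.

Lemma Un_invmx g : Un g -> Un (invmx g).
Proof.
move=> g_Un; have /andP[g_up /forallP g1] := g_Un.
have /andP[_ g_unit] := Un_Bn g_Un; have h_up := upper_trimx_invmx (Un_Bn g_Un).
rewrite /Un h_up; apply/forallP => a.
have := mulmx_upper_cone (Z := 1%:M) (r := a) (s := a) g_up h_up.
rewrite mulmx1 mulmxV // !mxE eqxx (eqP (g1 a)) /= mulr1n !mul1r => <- //.
move=> a' b' aa' b'a; rewrite mxE xpair_eqE; have [a'b'|] := eqVneq a' b'; last by [].
have a'a : a' = a by apply/val_inj/eqP; rewrite eqn_leq aa' a'b' b'a.
by rewrite -a'b' a'a eqxx.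
Qed.

Lemma simmx_Un_cone g X Y (i j : 'I_n) : Un g ->
  (forall a b : 'I_n, (i <= a)%N -> (b <= j)%N -> (a, b) != (i, j) -> X a b = Y a b) ->
  simmx g X i j - simmx g Y i j = X i j - Y i j.
Proof.
move=> g_Un XY; have /andP[g_up /forallP g1] := g_Un.
have /andP[h_up /forallP h1] := Un_invmx g_Un.
have -> : simmx g X i j - simmx g Y i j = (g *m (X - Y) *m invmx g) i j.
  by rewrite /simmx mulmxBr mulmxBl mxBE.
rewrite (mulmx_upper_cone g_up h_up) => [|a b ia bj abij]; rewrite mxBE.
  by rewrite (eqP (g1 i)) (eqP (h1 j)) mul1r mulr1.
by rewrite XY ?subrr.
Qed.

Lemma Nn_simmx g X : Bn g -> Nn X -> Nn (simmx g X).
Proof.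
move=> g_Bn /NnP X0; have /andP[g_up _] := g_Bn.
apply/NnP => r s sr; rewrite /simmx (mulmx_upper_cone g_up (upper_trimx_invmx g_Bn)).
  by rewrite X0 ?mulr0 ?mul0r.
by move=> a b ra bs _; rewrite X0 // (leq_trans bs (leq_trans sr ra)).
Qed.

End UpperTriangular.

Section Shear.
Variables (F : fieldType) (n : nat).

Definition shear (t : 'I_n) (u : 'I_n -> F) : 'M[F]_n :=
  1%:M + \matrix_(a, b) (u a *+ (b == t)).

Variable t : 'I_n.

Lemma shear_mulmx u X (a b : 'I_n) : (shear t u *m X) a b = X a b + u a * X t b.
Proof.
rewrite mulmxDl mul1mx !mxE; congr (_ + _).
by under eq_bigr do rewrite mxE mulrnAl; rewrite sum_mulrn_eq.
Qed.

Lemma mulmx_shear u X (a b : 'I_n) :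
  (X *m shear t u) a b = X a b + (\sum_c X a c * u c) *+ (b == t).
Proof.
rewrite mulmxDr mulmx1 !mxE -sumrMnl; congr (_ + _).
by apply: eq_bigr => c _; rewrite mxE mulrnAr.
Qed.

Variable u : 'I_n -> F.
Hypothesis u_above : forall a : 'I_n, (t <= a)%N -> u a = 0.

Lemma shear_mulmxN : shear t u *m shear t (fun a => - u a) = 1%:M.
Proof.
apply/matrixP => a b; rewrite shear_mulmx !mxE (u_above (leqnn t)) oppr0 mul0rn addr0.
by rewrite mulr_natr [t == b]eq_sym mulNrn subrK.
Qed.

Lemma invmx_shear : invmx (shear t u) = shear t (fun a => - u a).
Proof.
have [g_unit _] := mulmx1_unit shear_mulmxN.
by rewrite -[RHS](mulKmx g_unit) shear_mulmxN mulmx1.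
Qed.

Lemma Un_shear : Un (shear t u).
Proof.
apply/andP; split.
  apply/upper_trimxP => a b ba; rewrite !mxE.
  have -> : (a == b) = false by apply/eqP => abE; rewrite abE ltnn in ba.
  have [btE|] := eqVneq b t; last by rewrite addr0.
  by rewrite u_above ?mul0rn ?addr0 // -btE ltnW.
apply/forallP => a; rewrite !mxE eqxx; apply/eqP.
by have [->|_] := eqVneq a t; rewrite ?(u_above (leqnn t)) ?mul0rn ?mulr0n addr0.
Qed.

Lemma simmx_shear_entry X (a b : 'I_n) : simmx (shear t u) X a b =
  X a b + u a * X t b - (\sum_c (X a c + u a * X t c) * u c) *+ (b == t).
Proof.
rewrite /simmx invmx_shear mulmx_shear shear_mulmx.
by under eq_bigr do rewrite shear_mulmx mulrN; rewrite sumrN mulNrn.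
Qed.

End Shear.

Section BelitskiiOrder.
Variable n : nat.
Implicit Types p q : 'I_n * 'I_n.
Local Notation P := (belitskii_positions n).

Definition belitskii_lt p q := (q.1 < p.1)%N || (p.1 == q.1 :> nat) && (p.2 < q.2)%N.

Lemma belitskii_lt_trans : transitive belitskii_lt.
Proof. by move=> [a b] [c d] [e f]; rewrite /belitskii_lt /=; lia. Qed.

Lemma belitskii_lt_cone (a b r s : 'I_n) :
  (r <= a)%N -> (b <= s)%N -> (a, b) != (r, s) -> belitskii_lt (a, b) (r, s).
Proof. by rewrite /belitskii_lt xpair_eqE -!val_eqE /=; lia. Qed.

Lemma mem_belitskii_positions p : (p \in P) = (p.1 < p.2)%N.
Proof.
case: p => a b /=; apply/allpairsPdep/idP => [[i [j [_ + [-> ->]]]]|ab].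
  by rewrite mem_filter => /andP[].
by exists a, b; split; rewrite ?mem_rev ?mem_enum // mem_filter mem_enum andbT.
Qed.

Lemma sorted_belitskii_positions : sorted belitskii_lt P.
Proof.
have ltn_tr : transitive (fun a b : 'I_n => (a < b)%N) by move=> b a c; apply: ltn_trans.
have gtn_tr : transitive (fun a b : 'I_n => (b < a)%N).
  by move=> b a c /= ba cb; apply: ltn_trans cb ba.
have ltn_enum : sorted (fun a b : 'I_n => (a < b)%N) (enum 'I_n).
  by have := iota_ltn_sorted 0 n; rewrite -val_enum_ord sorted_map.
have : pairwise (fun a b : 'I_n => (b < a)%N) (rev (enum 'I_n)).
  by rewrite -(sorted_pairwise gtn_tr) rev_sorted.
move: ltn_enum; rewrite (sorted_pairwise ltn_tr) => ltn_enum.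
rewrite (sorted_pairwise belitskii_lt_trans).
rewrite /belitskii_positions; elim: (rev _) => //= i s IH /andP[i_s s_lt].
rewrite pairwise_cat IH // andbT; apply/andP; split.
  apply/allrelP => p q /mapP[j _ ->] /allpairsPdep[i' [j' [i's _ ->]]].
  by rewrite /belitskii_lt /= (allP i_s i' i's).
have := pairwise_filter (fun j : 'I_n => (i < j)%N) ltn_enum.
elim: (filter _ _) => //= j js IHj /andP[j_js js_lt].
rewrite IHj // andbT; apply/allP => q /mapP[j' j'js ->].
by rewrite /belitskii_lt /= eqxx (allP j_js j' j'js) orbT.
Qed.

Lemma index_belitskii_positions_lt p q : p \in P -> q \in P ->
  (index p P < index q P)%N = belitskii_lt p q.
Proof.
move=> pP qP; apply/idP/idP.
  exact: (sorted_ltn_index belitskii_lt_trans sorted_belitskii_positions).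
move=> pq; rewrite ltn_neqAle; apply/andP; split.
  apply: contraTneq pq => /(congr1 (nth p P)); rewrite !nth_index // => ->.
  by rewrite /belitskii_lt; lia.
rewrite leqNgt; apply/negP => /(sorted_ltn_index belitskii_lt_trans sorted_belitskii_positions).
by move=> /(_ qP pP); move: pq; rewrite /belitskii_lt; lia.
Qed.

Lemma mem_take_belitskii_positions m p :
  (p \in take m P) = (p \in P) && (index p P < m)%N.
Proof.
by case pP: (p \in P); [rewrite in_take | apply/negP => /mem_take; rewrite pP].
Qed.

Lemma take_belitskii_positions_cone m (a b r s : 'I_n) :
  (r, s) \in take m P -> (r <= a)%N -> (b <= s)%N -> (a < b)%N -> (a, b) \in take m P.
Proof.
rewrite !mem_take_belitskii_positions => /andP[rsP rsm] ra bs ab.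
have abP : (a, b) \in P by rewrite mem_belitskii_positions.
rewrite abP; apply: leq_ltn_trans rsm; have [->//|abrs] := eqVneq (a, b) (r, s).
by rewrite ltnW // index_belitskii_positions_lt // belitskii_lt_cone.
Qed.

End BelitskiiOrder.

Lemma agree_onP (F : fieldType) n (s : seq ('I_n * 'I_n)) (X Y : 'M[F]_n) :
  reflect (forall p, p \in s -> X p.1 p.2 = Y p.1 p.2) (agree_on s X Y).
Proof. by apply: (iffP allP) => XY p /XY => [/eqP|->]. Qed.

Section BelitskiiRun.
Variables (F : fieldType) (n : nat) (M : 'M[F]_n) (As : nat -> 'M[F]_n).
Local Notation P := (belitskii_positions n).
Local Notation A := (As (size P)).

Lemma belitskii_group_Bn k g : belitskii_group As k g -> Bn g.
Proof. by elim: k => //= k IH /andP[/IH]. Qed.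

Lemma belitskii_group_agree k g :
  belitskii_group As k g -> agree_on (take k P) (simmx g (As k)) (As k).
Proof. by case: k => [|k] /= => [_|/andP[]]; rewrite ?take0. Qed.

Hypothesis run : belitskii_run M As.

Lemma run_step k : (k < size P)%N ->
  As k.+1 = As k \/ exists2 g, belitskii_group As k g & As k.+1 = simmx g (As k).
Proof.
rewrite -onthTE; case kp: onth => [p|] // _.
have [_ [_ /(_ k p kp) [zero [one other]]]] := run.
have [|no_conj] := classic (exists2 g, belitskii_group As k g & As k.+1 = simmx g (As k)).
  by right.
by left; apply: other => [/zero|/one] [g Gg [E _]]; apply: no_conj; exists g.
Qed.

Lemma run_Nn k : (k <= size P)%N -> Nn (As k).
Proof.
elim: k => [_|k IH kN]; first by case: run => M_Nn [-> _].
have [->|[g Gg ->]] := run_step kN; first exact: IH (ltnW kN).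
exact: Nn_simmx (belitskii_group_Bn Gg) (IH (ltnW kN)).
Qed.

Lemma run_agree m k : (m <= k <= size P)%N -> agree_on (take m P) (As k) (As m).
Proof.
elim: k => [|k IH] /andP[mk kN]; first by case: m mk => // _; rewrite take0.
have [->|mNk] := eqVneq m k.+1; first exact/agree_onP.
move: mk; rewrite leq_eqVlt (negbTE mNk) ltnS /= => mk.
have /agree_onP Akm : agree_on (take m P) (As k) (As m) by apply: IH; rewrite mk ltnW.
apply/agree_onP => p pm.
have [->|[g Gg ->]] := run_step kN; first exact: Akm.
rewrite -Akm //; move/agree_onP: (belitskii_group_agree Gg); apply.
by move: pm; rewrite -(take_takel _ mk) => /mem_take.
Qed.

Lemma run_agree_final m : (m <= size P)%N -> agree_on (take m P) A (As m).
Proof. by move=> mN; apply: run_agree; rewrite mN leqnn. Qed.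

Lemma belitskii_groupP k g : (k <= size P)%N -> Bn g ->
  agree_on (take k P) (simmx g A) A -> belitskii_group As k g.
Proof.
move=> + g_Bn; have /andP[g_up _] := g_Bn; have h_up := upper_trimx_invmx g_Bn.
have /NnP A0 := run_Nn (leqnn (size P)).
elim: k => [//|k IH kN /agree_onP gA] /=.
have -> /= : belitskii_group As k g.
  apply: IH (ltnW kN) _; apply/agree_onP => p pk; apply: gA.
  by move: pk; rewrite -(take_takel P (leqnSn k)) => /mem_take.
have /NnP Ak0 := run_Nn kN; have /agree_onP Ak := run_agree_final kN.
apply/agree_onP => -[r s] rs /=.
rewrite /simmx (mulmx_upper_cone_eq (Y := A) g_up h_up) => [|a b ra bs].
  by rewrite [LHS](gA (r, s) rs) (Ak (r, s) rs).
have [ab|ba] := ltnP a b; last by rewrite A0 ?Ak0.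
by rewrite (Ak (a, b) (take_belitskii_positions_cone rs ra bs ab)).
Qed.

Lemma cf_entry_eq0 (i j : 'I_n) : (i < j)%N ->
  (forall x, exists2 g, Un g & simmx g A i j = A i j + x /\
     forall a b : 'I_n, (a < b)%N -> belitskii_lt (a, b) (i, j) -> simmx g A a b = A a b) ->
  A i j = 0.
Proof.
move=> ij shift; have ijP : (i, j) \in P by rewrite mem_belitskii_positions.
set k := index (i, j) P; have kN : (k < size P)%N by rewrite index_mem.
have earlier (a b : 'I_n) :
    (a < b)%N -> belitskii_lt (a, b) (i, j) -> (a, b) \in take k P.
  move=> ab abij; have abP : (a, b) \in P by rewrite mem_belitskii_positions.
  by rewrite mem_take_belitskii_positions abP index_belitskii_positions_lt.
have [_ [_ /(_ k _ (onth_index ijP)) [zero _]]] := run.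
have [|g _ [_ ij0]] := zero; last first.
  have ij_k : (i, j) \in take k.+1 P by rewrite mem_take_belitskii_positions ijP ltnSn.
  by move/agree_onP: (run_agree_final kN) => /(_ _ ij_k) /= ->; exact: ij0.
right=> x; have [g g_Un [gij g_earlier]] := shift (x - As k i j).
exists g.
  apply: belitskii_groupP (ltnW kN) (Un_Bn g_Un) _; apply/agree_onP => -[a b].
  rewrite mem_take_belitskii_positions mem_belitskii_positions => /andP[/= ab].
  by rewrite index_belitskii_positions_lt ?mem_belitskii_positions //; apply: g_earlier.
have /NnP A0 := run_Nn (leqnn (size P)); have /NnP Ak0 := run_Nn (ltnW kN).
have /agree_onP Ak := run_agree_final (ltnW kN).
have cone : simmx g (As k) i j - simmx g A i j = As k i j - A i j.
  apply: simmx_Un_cone g_Un _ => a b ia bj abij.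
  have [ab|ba] := ltnP a b; last by rewrite A0 ?Ak0.
  by rewrite (Ak (a, b) (earlier _ _ ab (belitskii_lt_cone ia bj abij))).
by apply: (addIr (- simmx g A i j)); rewrite /= cone gij; ring.
Qed.

End BelitskiiRun.

Definition GQ_arc n (I : {set 'I_n}) (sigma : 'I_n -> 'I_n) : rel 'I_n :=
  [rel x y | (x \in I) && (sigma x == y)].

Lemma subperm_mulmxE (F : fieldType) n (I : {set 'I_n}) (sigma : 'I_n -> 'I_n)
    (U : 'M[F]_n) (a b : 'I_n) :
  (subperm_mx F I sigma *m U) a b = if a \in I then U (sigma a) b else 0.
Proof.
rewrite mxE; case: ifP => aI.
  rewrite (bigD1 (sigma a)) //= !mxE aI eqxx mul1r big1 ?addr0 // => c ca.
  by rewrite mxE aI eq_sym (negbTE ca) mul0r.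
by rewrite big1 // => c _; rewrite mxE aI mul0r.
Qed.

Section SubpermCanonicalForm.
Variables (F : fieldType) (n : nat) (I : {set 'I_n}) (sigma : 'I_n -> 'I_n).
Hypothesis sigma_inj : {in I &, injective sigma}.
Hypothesis sigma_incr : forall i, i \in I -> (i < sigma i)%N.
Variables (M U : 'M[F]_n) (As : nat -> 'M[F]_n).
Hypothesis run : belitskii_run M As.
Hypothesis U_Un : Un U.
Local Notation P := (belitskii_positions n).
Local Notation Q := (subperm_mx F I sigma).
Local Notation A := (As (size P)).
Hypothesis A_QU : A = Q *m U.

Lemma cf_head_eq0 (i j : 'I_n) : i \in I -> j \notin I -> (sigma i < j)%N -> A i j = 0.
Proof.
move=> iI jNI sij; have ij := ltn_trans (sigma_incr iI) sij.
have /upper_trimxP V0 := upper_trimx_invmx (Un_Bn U_Un).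
have /andP[_ U_unit] := Un_Bn U_Un.
apply: (cf_entry_eq0 run ij) => x.
pose u (c : 'I_n) := - x * invmx U c (sigma i).
have u_above (c : 'I_n) : (j <= c)%N -> u c = 0.
  by move=> jc; rewrite /u V0 ?mulr0 // (leq_trans sij jc).
have Q_col (a : 'I_n) : Q a (sigma i) = (a == i)%:R.
  rewrite mxE; have [->|aNi] := eqVneq a i; first by rewrite iI eqxx.
  by case aI: (a \in I) => //=; rewrite (inj_in_eq sigma_inj) // (negbTE aNi).
have Au (a : 'I_n) : \sum_c A a c * u c = - x * (a == i)%:R.
  rewrite -Q_col -[Q](mulmxK U_unit) -A_QU mxE mulr_sumr.
  by apply: eq_bigr => c _; rewrite mulrCA.
have A_row_j (b : 'I_n) : A j b = 0 by rewrite A_QU subperm_mulmxE (negbTE jNI).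
have g_entry (a b : 'I_n) :
    simmx (shear j u) A a b = A a b + (x * (a == i)%:R) *+ (b == j).
  rewrite simmx_shear_entry // A_row_j mulr0 addr0.
  by under eq_bigr do rewrite A_row_j mulr0 addr0; rewrite Au mulNr mulNrn opprK.
exists (shear j u); first exact: Un_shear.
split=> [|a b _ ab_ij]; rewrite g_entry; first by rewrite !eqxx mulr1.
have [aE|] := eqVneq a i; last by rewrite mulr0 mul0rn addr0.
have [bE|] := eqVneq b j; last by rewrite mulr0n addr0.
by move: ab_ij; rewrite aE bE /belitskii_lt /=; lia.
Qed.

Lemma cf_succ_eq0 (i q : 'I_n) : q \in I -> (i < q)%N -> A i (sigma q) = 0.
Proof.
move=> qI iq; have ij := ltn_trans iq (sigma_incr qI).
have /NnP A0 := run_Nn run (leqnn (size P)).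
have /andP[/upper_trimxP U0 /forallP U1] := U_Un.
have A_row_q (b : 'I_n) : A q b = U (sigma q) b by rewrite A_QU subperm_mulmxE qI.
apply: (cf_entry_eq0 run ij) => x.
pose u (c : 'I_n) := x *+ (c == i).
have u_above (c : 'I_n) : (q <= c)%N -> u c = 0.
  by move=> qc; rewrite /u; have [ciE|] := eqVneq c i; [rewrite ciE in qc; lia | rewrite mulr0n].
have g_entry (a b : 'I_n) :
    simmx (shear q u) A a b = A a b + u a * U (sigma q) b - (A a i * x) *+ (b == q).
  rewrite simmx_shear_entry // A_row_q (bigD1 i) //= big1 ?addr0 => [|c ci]; last first.
    by rewrite /u (negbTE ci) mulr0n mulr0.
  by rewrite A_row_q (U0 _ i (ltn_trans iq (sigma_incr qI))) mulr0 addr0 /u eqxx mulr1n.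
exists (shear q u); first exact: Un_shear.
split=> [|a b _]; rewrite g_entry.
  by rewrite /u eqxx mulr1n (eqP (U1 _)) mulr1 (A0 i i (leqnn i)) mul0r mul0rn subr0.
rewrite /belitskii_lt /= => /orP[ia|/andP[/eqP/val_inj aE bj]].
  by rewrite (A0 a i (ltnW ia)) mul0r mul0rn subr0 /u -val_eqE (gtn_eqF ia) mulr0n mul0r addr0.
by rewrite aE (A0 i i (leqnn i)) mul0r mul0rn subr0 U0 // mulr0 addr0.
Qed.

Lemma cf_nz_support (i j : 'I_n) :
  A i j != 0 -> [/\ i \in I, A i j = U (sigma i) j & (sigma i <= j)%N].
Proof.
have /andP[/upper_trimxP U0 _] := U_Un.
rewrite A_QU subperm_mulmxE; case: ifP => [iI Aij|_]; last by rewrite eqxx.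
split=> //; rewrite leqNgt; apply: contra Aij => /U0 ->; exact: eqxx.
Qed.

Lemma cf_nz_cases (i j : 'I_n) : A i j != 0 ->
  i \in I /\
  [\/ j = sigma i /\ A i j = 1,
      j \in ~: (sigma @: I) :\: ~: I /\ (sigma i < j)%N
    | j \notin ~: (sigma @: I) :|: ~: I /\
      (exists2 jm, (jm \in I) && (sigma jm == j) & (jm < i)%N) /\
      (i < sigma i)%N /\ (sigma i < j)%N].
Proof.
move=> Aij; have [iI AijE sij] := cf_nz_support Aij; split=> //.
have [jE|jNsi] := eqVneq j (sigma i).
  by constructor 1; split=> //; have /andP[_ /forallP/(_ j)/eqP] := U_Un; rewrite AijE jE.
move: sij; rewrite leq_eqVlt val_eqE eq_sym (negbTE jNsi) /= => sij.
have jI : j \in I by apply: contraNT Aij => jNI; rewrite cf_head_eq0.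
have [/imsetP[q qI jE]|jNs] := boolP (j \in sigma @: I); last first.
  by constructor 2; rewrite !inE jNs jI.
have [iq|qi|/val_inj iqE] := ltngtP i q.
- by move: Aij; rewrite jE cf_succ_eq0 ?eqxx.
- constructor 3; split; first by rewrite !inE negb_or negbK jI andbT; apply/imsetP; exists q.
  by split; [exists q; rewrite ?qI ?jE ?eqxx | split; [apply: sigma_incr|]].
- by move: sij; rewrite jE iqE ltnn.
Qed.

Lemma cf_nz_pred_le (i j w : 'I_n) : A i j != 0 -> w \in I -> sigma w = j -> (w <= i)%N.
Proof.
move=> Aij wI wj; have [iI [[jE _]|[]|[_ [[jm /andP[jmI /eqP jmj] jmi] _]]]] := cf_nz_cases Aij.
- by rewrite (sigma_inj wI iI (etrans wj jE)).
- by rewrite !inE -wj imset_f ?andbF.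
- by rewrite (sigma_inj wI jmI (etrans wj (esym jmj))) ltnW.
Qed.

Lemma cf_row_chain_uniq (i j1 j2 : 'I_n) : i \in I ->
  connect (GQ_adj I sigma) j1 j2 -> A i j1 != 0 -> A i j2 != 0 -> j1 = j2.
Proof.
move=> iI.
have arc_fun x y y' : GQ_arc I sigma x y -> GQ_arc I sigma x y' -> y = y'.
  by move=> /andP[_ /eqP<-] /andP[_ /eqP<-].
have arc_inj x x' y : GQ_arc I sigma x y -> GQ_arc I sigma x' y -> x = x'.
  by move=> /andP[xI /eqP<-] /andP[x'I /eqP/esym/sigma_inj]; apply.
have arc_lt : {homo val : x y / GQ_arc I sigma x y >-> (x < y)%N}.
  by move=> x y /andP[/sigma_incr + /eqP<-].
suff directed j j' : connect (GQ_arc I sigma) j j' -> A i j != 0 -> A i j' != 0 -> j = j'.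
  move=> /(connect_undirected arc_fun arc_inj)/orP[c|c] A1 A2; first exact: directed.
  exact/esym/directed.
move=> jj' Aj Aj'; apply/eqP; apply: contraT => jNj'.
have [w jw /andP[wI /eqP wj']] := connect_last jj' jNj'.
have [_ _ sij] := cf_nz_support Aj.
have jw_le := connect_homo_leq arc_lt jw; have wi := cf_nz_pred_le Aj' wI wj'.
by have := leq_trans (sigma_incr iI) (leq_trans sij (leq_trans jw_le wi)); rewrite ltnn.
Qed.

End SubpermCanonicalForm.

Unset Implicit Arguments.

Theorem theorem4p8 (F : fieldType) (n : nat) (I : {set 'I_n})
    (sigma : 'I_n -> 'I_n)
    (sigma_inj : {in I &, injective sigma})
    (sigma_incr : forall i, i \in I -> (i < sigma i)%N)
    (A : 'M[F]_n)
    (HQU : in_QU (subperm_mx F I sigma) A)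
    (Hcf : is_belitskii_cf A) :
  let Sh := ~: I in
  let St := ~: (sigma @: I) in
  (forall i j : 'I_n, A i j != 0 ->
     i \in I /\
     [\/ j = sigma i /\ A i j = 1,
         j \in St :\: Sh /\ (sigma i < j)%N
       | j \notin St :|: Sh /\
         (exists2 jm, (jm \in I) && (sigma jm == j) & (jm < i)%N) /\
         (i < sigma i)%N /\ (sigma i < j)%N]) /\
  (forall i : 'I_n, i \in I -> forall j1 j2 : 'I_n,
     connect (GQ_adj I sigma) j1 j2 -> A i j1 != 0 -> A i j2 != 0 -> j1 = j2).
Proof.
case: HQU => U U_Un A_QU; case: Hcf => M [As [run A_final]].
rewrite A_final in A_QU * => Sh St; split.
- move=> i j; exact: (cf_nz_cases sigma_inj sigma_incr run U_Un A_QU).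
- move=> i iI j1 j2; exact: (cf_row_chain_uniq sigma_inj sigma_incr run U_Un A_QU iI).
Qed.
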